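(* In the Bayesian online learning setting for $n$-round dynamic inference described in the context, for any online-learned estimation strategy and any round $i$, the parameter $W$ is conditionally independent of the current observation $X_i$ and the estimates $\hat Y^i$ up to round $i$, given the past observations $Z^{i-1}=((X_1,Y_1),\ldots,(X_{i-1},Y_{i-1}))$.
   Context: Setting (Bayesian online learning for $n$-round dynamic inference). $\mathsf X,\mathsf Y,\hat{\mathsf Y},\mathsf W$ are measurable spaces. The following are given: a distribution $P_{X_1}$ on $\mathsf X$; probability transition kernels $K_i(\cdot\mid x,\hat y)$ from $\mathsf X\times\hat{\mathsf Y}$ to $\mathsf X$ for $i=2,\ldots,n$; a parametrized family of kernels $\{P_{Y|X,w}:w\in\mathsf W\}$ from $\mathsf X$ to $\mathsf Y$; and a prior $P_W$ on $\mathsf W$. Write $Z_i=(X_i,Y_i)$. An online-learned estimation strategy is a tuple $(\psi_1,\ldots,\psi_n)$ of maps $\psi_i:(\mathsf X\times\mathsf Y)^{i-1}\times\hat{\mathsf Y}^{i-1}\times\mathsf X\to\hat{\mathsf Y}$. It determines the joint law of $(W,X^n,Y^n,\hat Y^n)$ as follows. $W\sim P_W$. $X_1\sim P_{X_1}$ is independent of $W$. For each $i$: given all previously generated variables, $Y_i\sim P_{Y|X,W}(\cdot\mid X_i,W)$; $\hat Y_i=\psi_i(Z^{i-1},\hat Y^{i-1},X_i)$; and, given all variables generated up to round $i$, $X_{i+1}\sim K_{i+1}(\cdot\mid X_i,\hat Y_i)$. *)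

From HB Require Import structures.
From mathcomp Require Import all_boot all_order all_algebra.
From mathcomp Require Import all_classical all_reals all_analysis.
Set Implicit Arguments. Unset Strict Implicit. Unset Printing Implicit Defensive.
Import Order.TTheory GRing.Theory Num.Theory.
Local Open Scope classical_set_scope.
Local Open Scope ring_scope.
Local Open Scope ereal_scope.

(* Rounds are indexed from 0: the Rocq round k (0 <= k < n) is the paper's
   round i = k+1.  Thus X k, Y k, Yh k stand for X_{k+1}, Y_{k+1}, \hat Y_{k+1},
   psi k stands for psi_{k+1}, and K k stands for K_{k+1} (used for k >= 1). *)

Definition Zpast {Om TX TY : Type} (X : nat -> Om -> TX) (Y : nat -> Om -> TY)
  (k : nat) (w : Om) : k.-tuple (TX * TY) :=
  [tuple (X (val j) w, Y (val j) w) | j < k].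

Definition past {Om T : Type} (V : nat -> Om -> T) (k : nat) (w : Om)
  : k.-tuple T := [tuple V (val j) w | j < k].

Definition in_sigma {d} {Om : Type} {TV : measurableType d} (V : Om -> TV)
  (G : set Om) : Prop :=
  exists2 B : set TV, measurable B & G = V @^-1` B.

(* Conditional independence of W and U given V (standard definition):
   for every measurable A, the conditional probability P(W in A | U, V)
   admits a version that is a (measurable) function of V alone, i.e.
   P(W in A | U, V) = P(W in A | V) a.s. *)
Definition cond_indep {R : realType} {dO dW dU dV}
  {Om : measurableType dO} {TW : measurableType dW}
  {TU : measurableType dU} {TV : measurableType dV}
  (P : probability Om R) (W : Om -> TW) (U : Om -> TU) (V : Om -> TV) : Prop :=
  forall A : set TW, measurable A ->
  exists g : TV -> R,
    [/\ measurable_fun setT g,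
        (forall v, (0 <= g v <= 1)%R) &
        forall (B : set TU) (C : set TV), measurable B -> measurable C ->
          P (W @^-1` A `&` U @^-1` B `&` V @^-1` C) =
          \int[P]_(w in U @^-1` B `&` V @^-1` C) (g (V w))%:E].

(* (P, W, X, Y, Yh) realizes the joint law of (W, X^n, Y^n, \hat Y^n)
   determined by the online-learned estimation strategy psi. *)
Definition generated_by {R : realType} {dO dX dY dYh dW}
  {Om : measurableType dO} {TX : measurableType dX} {TY : measurableType dY}
  {TYh : measurableType dYh} {TW : measurableType dW}
  (n : nat) (PX1 : probability TX R) (K : nat -> R.-pker (TX * TYh)%type ~> TX)
  (PY : R.-pker (TX * TW)%type ~> TY) (PW : probability TW R)
  (psi : forall k : nat, (k.-tuple (TX * TY) * k.-tuple TYh * TX)%type -> TYh)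
  (P : probability Om R) (W : Om -> TW) (X : nat -> Om -> TX)
  (Y : nat -> Om -> TY) (Yh : nat -> Om -> TYh) : Prop :=
      measurable_fun setT W /\
      (forall k, (k < n)%N -> measurable_fun setT (X k)) /\
      (forall k, (k < n)%N -> measurable_fun setT (Y k)) /\
      (forall A B, measurable A -> measurable B ->
         P (W @^-1` A `&` X 0%N @^-1` B) = PW A * PX1 B) /\
      (* Y_i ~ P_{Y|X,W}(. | X_i, W) given all previously generated variables
         (W, X^i, Y^{i-1}, \hat Y^{i-1}) *)
      (forall k, (k < n)%N -> forall G A,
         in_sigma (fun w => (W w, past X k.+1 w, past Y k w, past Yh k w)) G ->
         measurable A ->
         P (G `&` Y k @^-1` A) = \int[P]_(w in G) PY (X k w, W w) A) /\
      (forall k, (k < n)%N -> forall w,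
         Yh k w = psi k (Zpast X Y k w, past Yh k w, X k w)) /\
      (* X_{i+1} ~ K_{i+1}(. | X_i, \hat Y_i) given all variables up to round i *)
      (forall k, (k.+1 < n)%N -> forall G A,
         in_sigma (fun w => (W w, past X k.+1 w, past Y k.+1 w, past Yh k.+1 w)) G ->
         measurable A ->
         P (G `&` X k.+1 @^-1` A) = \int[P]_(w in G) K k.+1 (X k w, Yh k w) A).

From HB Require Import structures.
From mathcomp Require Import all_boot all_order all_algebra.
From mathcomp Require Import all_classical all_reals all_analysis.
From mathcomp Require Import measurable_realfun.
Set Implicit Arguments. Unset Strict Implicit. Unset Printing Implicit Defensive.
Import Order.TTheory GRing.Theory Num.Theory.
Local Open Scope classical_set_scope.
Local Open Scope ring_scope.

(* Write Z for the past Z^k and let g(Z) be a version of P(W in A | Z), a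
   Radon-Nikodym derivative truncated at 1.  Unrolling the recursion of the
   strategy, the estimates \hat Y^{k+1} are a measurable function of (Z, X_k),
   so it suffices that g(Z) is also a version of P(W in A | Z, X_k), and by
   uniqueness of measures it is enough to test the events {Z in C, X_k in D}.
   The fresh observation X_k is drawn from P_{X_1}, or from K_k evaluated at
   (X_{k-1}, \hat Y_{k-1}), which is again a function of Z; hence
   P(X_k in D | W, Z) = phi(Z), and both P(W in A, Z in C, X_k in D) and
   E[g(Z); Z in C, X_k in D] equal E[g(Z) phi(Z); Z in C]. *)

Lemma measurable_preimage d d' (T : measurableType d) (U : measurableType d')
    (f : T -> U) (B : set U) :
  measurable_fun setT f -> measurable B -> measurable (f @^-1` B).
Proof. by move=> mf mB; rewrite -[X in measurable X]setTI; exact: mf. Qed.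

Section pushforward_measures.
Local Open Scope ereal_scope.
Context d d' (T : measurableType d) (U : measurableType d') (R : realType).

Lemma semi_sigma_additive_pushforward (m : set T -> \bar R) (f : T -> U) :
  measurable_fun setT f -> semi_sigma_additive m ->
  semi_sigma_additive (pushforward m f).
Proof.
move=> mf sm F mF tF mUF; rewrite /pushforward preimage_bigcup.
apply: sm => [i||]; first exact: measurable_preimage.
  apply/trivIsetP => i j _ _ ij; rewrite -preimage_setI.
  by move/trivIsetP : tF => /(_ _ _ _ _ ij) ->//; rewrite preimage_set0.
by rewrite -preimage_bigcup; exact: measurable_preimage.
Qed.

(* The unused proof arguments let the measure instances below be inferred, as
   for [mrestr]. *)
Definition restr_pushforward (mu : set T -> \bar R) (S : set T)
    (mS : measurable S) (f : T -> U) (mf : measurable_fun setT f) :=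
  pushforward (mrestr mu mS) f.

Definition density_pushforward (mu : set T -> \bar R) (h : T -> \bar R)
    (mh : measurable_fun setT h) (h0 : forall x, 0 <= h x)
    (f : T -> U) (mf : measurable_fun setT f) :=
  pushforward (fun A => \int[mu]_(x in A) h x) f.

Variables (f : T -> U) (mf : measurable_fun setT f).

Section restr.
Variables (mu : {measure set T -> \bar R}) (S : set T) (mS : measurable S).

Let restr_pushforward0 : restr_pushforward mu mS mf set0 = 0.
Proof. by rewrite /restr_pushforward /pushforward preimage_set0 measure0. Qed.

Let restr_pushforward_ge0 C : 0 <= restr_pushforward mu mS mf C.
Proof. exact: measure_ge0. Qed.

Let restr_pushforward_sigma_additive :
  semi_sigma_additive (restr_pushforward mu mS mf).
Proof.
exact/(semi_sigma_additive_pushforward mf)/measure_semi_sigma_additive.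
Qed.

HB.instance Definition _ := isMeasure.Build _ _ _ (restr_pushforward mu mS mf)
  restr_pushforward0 restr_pushforward_ge0 restr_pushforward_sigma_additive.
End restr.

Section restr_finite.
Variables (mu : {finite_measure set T -> \bar R}) (S : set T)
  (mS : measurable S).

Let restr_pushforward_fin : fin_num_fun (restr_pushforward mu mS mf).
Proof. by move=> C mC; exact/fin_num_measure/measurable_preimage. Qed.

HB.instance Definition _ := Measure_isFinite.Build _ _ _
  (restr_pushforward mu mS mf) restr_pushforward_fin.
End restr_finite.

Section density.
Variables (mu : {measure set T -> \bar R}) (h : T -> \bar R)
  (mh : measurable_fun setT h) (h0 : forall x, 0 <= h x).

Let density_pushforward0 : density_pushforward mu mh h0 mf set0 = 0.
Proof.
by rewrite /density_pushforward /pushforward preimage_set0 integral_set0.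
Qed.

Let density_pushforward_ge0 C : 0 <= density_pushforward mu mh h0 mf C.
Proof. exact: integral_ge0. Qed.

Let density_pushforward_sigma_additive :
  semi_sigma_additive (density_pushforward mu mh h0 mf).
Proof.
exact/(semi_sigma_additive_pushforward mf)/semi_sigma_additive_nng_induced.
Qed.

HB.instance Definition _ := isMeasure.Build _ _ _
  (density_pushforward mu mh h0 mf) density_pushforward0
  density_pushforward_ge0 density_pushforward_sigma_additive.
End density.

End pushforward_measures.

Section truncated_density.
Local Open Scope ereal_scope.
Context d (T : measurableType d) (R : realType).
Variables (mu nu : {measure set T -> \bar R}) (f : T -> \bar R).
Hypotheses (mf : measurable_fun setT f) (f0 : forall x, 0 <= f x).
Hypothesis nu_le_mu : forall C, measurable C -> nu C <= mu C.
Hypothesis nu_density : forall C, measurable C -> nu C = \int[mu]_(x in C) f x.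

Lemma dominated_density_min1 C : measurable C ->
  nu C = \int[mu]_(x in C) mine (f x) 1.
Proof.
move=> mC; pose N := [set x | 1 < f x].
have mN : measurable N by rewrite -[N]setTI; exact: measurable_lte.
have mCN : measurable (C `&` N) by exact: measurableI.
have mCnN : measurable (C `&` ~` N) by exact/measurableI/measurableC.
have mmin : measurable_fun setT (fun x => mine (f x) 1).
  exact: measurable_mine.
have -> : C = (C `&` N) `|` (C `&` ~` N) by rewrite -setIUr setUv setIT.
have disjN : [disjoint C `&` N & C `&` ~` N].
  by rewrite /disj_set setIACA setICr setI0.
have min_ge0 x : 0 <= mine (f x) 1 by rewrite le_min f0 lee01.
rewrite nu_density; last exact: measurableU.
rewrite !ge0_integral_setU//; [|exact: measurable_funTS..].
congr (_ + _); last first.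
  apply: eq_integral => x /[!inE] -[_ /negP].
  by rewrite -leNgt => fx1; rewrite min_l.
have int_min : \int[mu]_(x in C `&` N) mine (f x) 1 = mu (C `&` N).
  rewrite -[RHS]mul1e -integral_cst//.
  by apply: eq_integral => x /[!inE] -[_ /ltW fx1]; rewrite min_r.
(* On [C `&` N]: nu <= mu = int min <= int f = nu. *)
apply/le_anti/andP; split.
  by rewrite -nu_density// int_min nu_le_mu.
apply: ge0_le_integral => //; first exact: measurable_funTS.
- exact: measurable_funTS.
- by move=> x _; rewrite ge_min lexx.
Qed.

End truncated_density.

Definition cond_prob_version d d' (Om : measurableType d)
    (T : measurableType d') (R : realType) (P : set Om -> \bar R) (S : set Om)
    (V : Om -> T) (g : T -> R) :=
  forall C, measurable C ->
    P (S `&` V @^-1` C) = (\int[P]_(w in V @^-1` C) (g (V w))%:E)%E.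

Section conditional_probability.
Local Open Scope ereal_scope.
Context d d' (Om : measurableType d) (T : measurableType d') (R : realType).

Lemma cond_prob_exists (P : {finite_measure set Om -> \bar R}) (V : Om -> T)
    (mV : measurable_fun setT V) (S : set Om) (mS : measurable S) :
  exists g : T -> R, [/\ measurable_fun setT g, (forall v, 0 <= g v <= 1)%R &
    cond_prob_version P S V g].
Proof.
pose mu := restr_pushforward P measurableT mV.
pose nu := restr_pushforward P mS mV.
have nu_le_mu C : measurable C -> nu C <= mu C.
  move=> mC; apply: le_measure; rewrite ?inE/=; last exact: setIS.
  - exact/measurableI/mS/measurable_preimage.
  - exact/measurableI/measurableT/measurable_preimage.
have nu_mu : nu `<< mu.
  apply/null_content_dominatesP => C mC muC0; apply/le_anti.
  by rewrite measure_ge0 andbT -muC0 nu_le_mu.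
have [f [f0 intf nu_density]] := radon_nikodym_finite nu_mu.
have mf : measurable_fun setT f := measurable_int _ intf.
have min_ge0 v : 0 <= mine (f v) 1 by rewrite le_min f0 lee01.
have min_le1 v : mine (f v) 1 <= 1 by rewrite ge_min lexx orbT.
(* [f <= 1] holds only almost everywhere; truncation makes it hold everywhere
   without changing the integrals. *)
pose g v := fine (mine (f v) 1).
have gE v : (g v)%:E = mine (f v) 1.
  by rewrite fineK// ge0_fin_numE// (le_lt_trans (min_le1 v)) ?ltry.
exists g; split.
- exact/measurableT_comp/measurable_mine.
- by move=> v; rewrite -!lee_fin gE min_ge0 min_le1.
move=> C mC; rewrite setIC.
transitivity (\int[pushforward P V]_(x in C) (g x)%:E); last first.
  rewrite ge0_integral_pushforward// => [|y _]; last by rewrite gE.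
  exact/measurable_funTS/measurable_EFinP/measurableT_comp/measurable_mine.
rewrite (@eq_measure_integral _ _ _ _ mu); last first.
  by move=> A mA _ /=; rewrite /restr_pushforward /pushforward /mrestr /= setIT.
under eq_integral do rewrite gE.
exact: (dominated_density_min1 mf f0 nu_le_mu nu_density).
Qed.

Section integral_cond_prob.
Import HBNNSimple.
Variables (P : {measure set Om -> \bar R}) (V : Om -> T)
  (mV : measurable_fun setT V) (S : set Om) (mS : measurable S)
  (g : T -> R) (mg : measurable_fun setT g) (g0 : forall v, (0 <= g v)%R).
Hypothesis hg : cond_prob_version P S V g.
Variables (C : set T) (mC : measurable C).

Let mVC : measurable (V @^-1` C). Proof. exact: measurable_preimage. Qed.

Let mSVC : measurable (S `&` V @^-1` C). Proof. exact: measurableI. Qed.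

Let mgV : measurable_fun setT (fun w => (g (V w))%:E).
Proof. exact/measurable_EFinP/measurableT_comp. Qed.

Let integral_indic_cond (B : set T) : measurable B ->
  \int[P]_(w in S `&` V @^-1` C) (\1_B (V w))%:E =
  \int[P]_(w in V @^-1` C) ((\1_B (V w))%:E * (g (V w))%:E).
Proof.
move=> mB; have mVB : measurable (V @^-1` B) by exact: measurable_preimage.
under eq_integral do rewrite -[\1_B (V _)]/(\1_(V @^-1` B) _).
rewrite integral_indic//.
rewrite setIC -setIA -preimage_setI.
rewrite hg; last exact: measurableI.
rewrite preimage_setI integral_mkcondr epatch_indic.
by apply: eq_integral => w _; rewrite muleC.
Qed.

Let integral_nnsfun_cond (h : {nnsfun T >-> R}) :
  \int[P]_(w in S `&` V @^-1` C) (h (V w))%:E =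
  \int[P]_(w in V @^-1` C) ((h (V w))%:E * (g (V w))%:E).
Proof.
pose hy y w := (y * \1_(h @^-1` [set y]) (V w))%:E.
have hE w : (h (V w))%:E = \sum_(y \in range h) hy y w.
  by rewrite fimfunE -fsumEFin.
have hy_ge0 y w : 0 <= hy y w by exact: nnfun_muleindic_ge0.
have mind y : measurable_fun setT (fun w => \1_(h @^-1` [set y]) (V w) : R).
  by apply: measurableT_comp => //; exact: measurable_indic.
have mhy y : measurable_fun setT (hy y).
  exact/measurable_EFinP/measurable_funM.
under eq_integral do rewrite hE.
under [RHS]eq_integral do rewrite hE ge0_mule_fsuml//.
rewrite !ge0_integral_fsum//;
  [|by move=> y; exact/measurable_funTS/emeasurable_funM
   |by move=> y w _; rewrite mule_ge0 ?hy_ge0 ?lee_fin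
   |by move=> y; exact: measurable_funTS].
apply: eq_fsbigr => y /[!inE] -[x _ hxy].
have y_ge0 : (0 <= y)%R by rewrite -hxy.
under eq_integral do rewrite /hy EFinM.
under [RHS]eq_integral do rewrite /hy EFinM -muleA.
rewrite !ge0_integralZl// ?lee_fin//; first by rewrite integral_indic_cond.
- exact/measurable_funTS/emeasurable_funM/mgV/measurable_EFinP.
- by move=> w _; rewrite mule_ge0 ?lee_fin.
- exact/measurable_funTS/measurable_EFinP.
Qed.

Lemma ge0_integral_cond_prob (f : T -> \bar R) :
  measurable_fun setT f -> (forall v, 0 <= f v) ->
  \int[P]_(w in S `&` V @^-1` C) f (V w) =
  \int[P]_(w in V @^-1` C) (f (V w) * (g (V w))%:E).
Proof.
move=> mf f0; pose h := nnsfun_approx measurableT mf.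
have h_cvg v : (fun k => (h k v)%:E) @ \oo --> f v.
  exact: cvg_nnsfun_approx.
have h_nd v : {homo (fun k => h k v) : a b / (a <= b)%N >-> (a <= b)%R}.
  by move=> a b ab; exact/lefP/nd_nnsfun_approx.
have mhV k : measurable_fun setT (fun w => (h k (V w))%:E).
  exact/measurable_EFinP/measurableT_comp.
transitivity (limn (fun k => \int[P]_(w in S `&` V @^-1` C) (h k (V w))%:E)).
  rewrite -monotone_convergence//.
  - by apply: eq_integral => w _; apply/esym/cvg_lim.
  - by move=> k; exact: measurable_funTS.
  - by move=> k w _; rewrite lee_fin.
  - by move=> w _ a b ab; rewrite lee_fin h_nd.
under eq_fun do rewrite integral_nnsfun_cond.
rewrite -monotone_convergence//.
- by apply: eq_integral => w _; apply/cvg_lim => //; exact: cvgeZr.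
- by move=> k; exact/measurable_funTS/emeasurable_funM.
- by move=> k w _; rewrite mule_ge0 ?lee_fin.
- by move=> w _ a b ab; rewrite lee_wpmul2r ?lee_fin ?h_nd.
Qed.

End integral_cond_prob.

(* The second hypothesis says that U is conditionally independent of S
   given V. *)
Lemma cond_prob_version_pair d'' (T' : measurableType d'')
    (P : {finite_measure set Om -> \bar R}) (V : Om -> T) (U : Om -> T')
    (mV : measurable_fun setT V) (mU : measurable_fun setT U)
    (S : set Om) (mS : measurable S) (g : T -> R)
    (mg : measurable_fun setT g) (g0 : forall v, (0 <= g v)%R) :
  cond_prob_version P S V g ->
  (forall D, measurable D -> exists phi : T -> R,
     [/\ measurable_fun setT phi, (forall v, 0 <= phi v)%R,
         cond_prob_version P (U @^-1` D) V phi &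
         forall C, measurable C -> P (S `&` V @^-1` C `&` U @^-1` D) =
           \int[P]_(w in S `&` V @^-1` C) (phi (V w))%:E]) ->
  cond_prob_version P S (fun w => (V w, U w)) (g \o fst).
Proof.
move=> hg hU E mE.
have mVU : measurable_fun setT (fun w => (V w, U w)).
  exact: measurable_fun_pair.
have mgV : measurable_fun setT (fun w => (g (V w))%:E).
  exact/measurable_EFinP/measurableT_comp.
have gV0 w : 0 <= (g (V w))%:E by rewrite lee_fin.
rewrite setIC.
(* Both sides are finite measures in E, and on a rectangle C x D both equal
   the integral of phi_D(V) g(V) over V^-1 C. *)
apply: (measure_unique [set C `*` D | C in measurable & D in measurable]
  (fun _ => setT) _ _ _ _ (restr_pushforward P mS mVU)
  (density_pushforward P mgV gV0 mVU) _ _ E mE).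
- exact: measurable_prod_measurableType.
- move=> _ _ [C1 mC1 [D1 mD1 <-]] [C2 mC2 [D2 mD2 <-]].
  exists (C1 `&` C2); first exact: measurableI.
  by exists (D1 `&` D2); [exact: measurableI|rewrite setXI].
- by move=> _; exists setT => //; exists setT => //; rewrite setXTT.
- by rewrite bigcup_const.
- move=> _ [C mC [D mD <-]] /=.
  rewrite /restr_pushforward /density_pushforward /pushforward /mrestr /=.
  have [phi [mphi phi0 hphi hphiS]] := hU D mD.
  have mphiE : measurable_fun setT (fun v => (phi v)%:E).
    exact/measurable_EFinP.
  have mgE : measurable_fun setT (fun v => (g v)%:E) by exact/measurable_EFinP.
  have -> : (fun w => (V w, U w)) @^-1` (C `*` D) = V @^-1` C `&` U @^-1` D.
    by [].
  rewrite setIC setIA hphiS//.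
  rewrite (ge0_integral_cond_prob mV mS mg g0 hg mC mphiE) => [|v].
    rewrite setIC (ge0_integral_cond_prob mV _ mphi phi0 hphi mC mgE) => [||v].
    - by apply: eq_integral => w _; rewrite muleC.
    - exact: measurable_preimage.
    - by rewrite lee_fin.
  by rewrite lee_fin.
- by move=> _; rewrite -ge0_fin_numE// fin_num_measure.
Qed.
End conditional_probability.

Definition factors_through {Om : Type} d d' (T : measurableType d)
    (T' : measurableType d') (F : Om -> T) (G : Om -> T') :=
  exists2 h : T -> T', measurable_fun setT h & forall w, G w = h (F w).

Section factors_through.
Context {Om : Type} d1 d2 d3 (T1 : measurableType d1) (T2 : measurableType d2)
  (T3 : measurableType d3).
Implicit Types (F : Om -> T1).

Lemma factors_through_trans F (G : Om -> T2) (H : Om -> T3) :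
  factors_through F G -> factors_through G H -> factors_through F H.
Proof.
move=> [f mf hG] [g mg hH]; exists (g \o f); first exact: measurableT_comp.
by move=> w; rewrite hH hG.
Qed.

Lemma factors_through_comp F (G : Om -> T2) (f : T2 -> T3) :
  measurable_fun setT f -> factors_through F G -> factors_through F (f \o G).
Proof.
move=> mf [h mh hG]; exists (f \o h); first exact: measurableT_comp.
by move=> w /=; rewrite hG.
Qed.

Lemma factors_through_pair F (G1 : Om -> T2) (G2 : Om -> T3) :
  factors_through F G1 -> factors_through F G2 ->
  factors_through F (fun w => (G1 w, G2 w)).
Proof.
move=> [h1 mh1 hG1] [h2 mh2 hG2]; exists (fun t => (h1 t, h2 t)).
  exact: measurable_fun_pair.
by move=> w; rewrite hG1 hG2.
Qed.

Lemma factors_through_mktuple F m (G : 'I_m -> Om -> T2) :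
  (forall i, factors_through F (G i)) ->
  factors_through F (fun w => [tuple G i w | i < m]).
Proof.
move=> hG; have /choice[h hh] : forall i, exists h : T1 -> T2,
    measurable_fun setT h /\ forall w, G i w = h (F w).
  by move=> i; have [h mh hGi] := hG i; exists h.
exists (fun t => [tuple h i t | i < m]).
  apply/measurable_fun_tnthP => i.
  rewrite (_ : _ \o _ = h i); first exact: (hh i).1.
  by apply/funext => t /=; rewrite tnth_mktuple.
by move=> w; apply: eq_mktuple => i; exact: (hh i).2.
Qed.

Lemma in_sigma_preimage F (G : Om -> T2) (B : set T2) :
  factors_through F G -> measurable B -> in_sigma F (G @^-1` B).
Proof.
move=> [h mh hG] mB; exists (h @^-1` B); first exact: measurable_preimage.
by apply/seteqP; split => w /=; rewrite hG.
Qed.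

End factors_through.

Lemma prob_kernel_fin_num d d' (T : measurableType d) (U : measurableType d')
    (R : realType) (k : R.-pker T ~> U) x (A : set U) :
  measurable A -> k x A \is a fin_num.
Proof.
move=> mA; rewrite ge0_fin_numE// (le_lt_trans _ (ltry 1))//.
by rewrite -(@prob_kernel _ _ _ _ _ k x); apply: le_measure; rewrite ?inE.
Qed.

Section online_learning.
Local Open Scope ereal_scope.
Context (R : realType) (dO dX dY dYh dW : measure_display)
  (Om : measurableType dO) (TX : measurableType dX) (TY : measurableType dY)
  (TYh : measurableType dYh) (TW : measurableType dW).
Variables (n : nat)
  (psi : forall k : nat, (k.-tuple (TX * TY) * k.-tuple TYh * TX)%type -> TYh)
  (X : nat -> Om -> TX) (Y : nat -> Om -> TY) (Yh : nat -> Om -> TYh).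
Hypothesis psi_meas : forall k : nat, measurable_fun setT (@psi k).
Hypothesis hYh : forall k, (k < n)%N -> forall w,
  Yh k w = psi (Zpast X Y k w, past Yh k w, X k w).

Lemma factors_through_Zpast k i : (i < k)%N ->
  factors_through (Zpast X Y k) (fun w => (X i w, Y i w)).
Proof.
move=> ik; exists (fun v => tnth v (Ordinal ik)); first exact: measurable_tnth.
by move=> w; rewrite tnth_mktuple.
Qed.

Lemma estimate_factors_through d (T : measurableType d) (F : Om -> T) m j :
  (m <= n)%N ->
  (forall i, (i < m)%N -> factors_through F (X i)) ->
  (forall i, (i.+1 < m)%N -> factors_through F (Y i)) ->
  (j < m)%N -> factors_through F (Yh j).
Proof.
move=> mn hX hY; elim/ltn_ind: j => j IH jm.
have -> : Yh j = @psi j \o (fun w => (Zpast X Y j w, past Yh j w, X j w)).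
  by apply/funext => w; rewrite /= hYh// (leq_trans jm).
apply: factors_through_comp; first exact: psi_meas.
apply: factors_through_pair; last exact: hX.
apply: factors_through_pair; apply: factors_through_mktuple => i.
  apply: factors_through_pair; [apply: hX|apply: hY].
    exact: ltn_trans (ltn_ord i) jm.
  exact: leq_ltn_trans (ltn_ord i) jm.
by apply: IH; [exact: ltn_ord|exact: ltn_trans (ltn_ord i) jm].
Qed.

Lemma past_estimates_factor_through k : (k < n)%N ->
  factors_through (fun w => (Zpast X Y k w, X k w)) (past Yh k.+1).
Proof.
move=> kn; have Zpair i : (i < k)%N -> factors_through
    (fun w => (Zpast X Y k w, X k w)) (fun w => (X i w, Y i w)).
  move=> ik; apply: factors_through_trans (factors_through_Zpast ik).
  by exists fst.
apply: factors_through_mktuple => i.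
apply: (@estimate_factors_through _ _ _ k.+1) => // [j|j|]; last exact: ltn_ord.
  rewrite ltnS leq_eqVlt => /predU1P[->|jk]; first by exists snd.
  exact: factors_through_comp measurable_fst (Zpair _ jk).
by rewrite ltnS => jk; exact: factors_through_comp measurable_snd (Zpair _ jk).
Qed.

Lemma last_estimate_factors_through j : (j < n)%N ->
  factors_through (Zpast X Y j.+1) (fun w => (X j w, Yh j w)).
Proof.
move=> jn; have ZX i : (i < j.+1)%N -> factors_through (Zpast X Y j.+1) (X i).
  move=> ij.
  exact: factors_through_comp measurable_fst (factors_through_Zpast ij).
apply: factors_through_pair; first exact: ZX.
apply: (@estimate_factors_through _ _ _ j.+1) => // i ij.
exact: factors_through_comp measurable_snd (factors_through_Zpast (ltnW ij)).
Qed.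

Variables (P : probability Om R) (PX1 : probability TX R)
  (PW : probability TW R) (K : nat -> R.-pker (TX * TYh)%type ~> TX)
  (W : Om -> TW).
Hypotheses (mW : measurable_fun setT W)
  (mX : forall k, (k < n)%N -> measurable_fun setT (X k))
  (mY : forall k, (k < n)%N -> measurable_fun setT (Y k)).
Hypothesis hX0 : forall A B, measurable A -> measurable B ->
  P (W @^-1` A `&` X 0%N @^-1` B) = PW A * PX1 B.
Hypothesis hK : forall k, (k.+1 < n)%N -> forall G A,
  in_sigma (fun w => (W w, past X k.+1 w, past Y k.+1 w, past Yh k.+1 w)) G ->
  measurable A ->
  P (G `&` X k.+1 @^-1` A) = \int[P]_(w in G) K k.+1 (X k w, Yh k w) A.

Lemma measurable_Zpast k : (k <= n)%N -> measurable_fun setT (Zpast X Y k).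
Proof.
move=> kn; apply/measurable_fun_tnthP => i.
rewrite (_ : _ \o _ = fun w => (X i w, Y i w)).
  by apply: measurable_fun_pair; [apply: mX|apply: mY]; exact: leq_trans kn.
by apply/funext => w /=; rewrite tnth_mktuple.
Qed.

Lemma first_obs_cond_prob A C D : measurable A -> measurable D ->
  P (W @^-1` A `&` Zpast X Y 0 @^-1` C `&` X 0%N @^-1` D) =
  \int[P]_(w in W @^-1` A `&` Zpast X Y 0 @^-1` C) (fine (PX1 D))%:E.
Proof.
move=> mA mD; have [C0|nC0] := pselect (C [tuple]); last first.
  have -> : Zpast X Y 0 @^-1` C = set0.
    by apply/seteqP; split => // w; rewrite /= tuple0.
  by rewrite setI0 set0I measure0 integral_set0.
have -> : Zpast X Y 0 @^-1` C = setT.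
  by apply/seteqP; split => // w _; rewrite /= tuple0.
rewrite !setIT integral_cst; last exact: measurable_preimage.
have PWA : P (W @^-1` A) = PW A.
  rewrite -(setIT (W @^-1` A)) -(preimage_setT (X 0%N)) hX0//.
  by rewrite probability_setT mule1.
by rewrite fineK ?fin_num_measure// hX0// muleC; congr (_ * _); exact/esym/PWA.
Qed.

Lemma next_obs_cond_prob j A C D : (j.+1 < n)%N ->
  measurable A -> measurable C -> measurable D ->
  P (W @^-1` A `&` Zpast X Y j.+1 @^-1` C `&` X j.+1 @^-1` D) =
  \int[P]_(w in W @^-1` A `&` Zpast X Y j.+1 @^-1` C) K j.+1 (X j w, Yh j w) D.
Proof.
move=> jn mA mC mD; apply: hK => //.
rewrite -[_ `&` _]/((fun w => (W w, Zpast X Y j.+1 w)) @^-1` (A `*` C)).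
apply: in_sigma_preimage; last exact: measurableX.
apply: factors_through_pair.
  by exists (fun q => q.1.1.1) => //; do 2 apply: measurableT_comp => //.
apply: factors_through_mktuple => i; apply: factors_through_pair.
- exists (fun q => tnth q.1.1.2 i) => [|w]; last by rewrite tnth_mktuple.
  apply: measurableT_comp (measurable_tnth i) _.
  by do 2 apply: measurableT_comp => //.
- exists (fun q => tnth q.1.2 i) => [|w]; last by rewrite tnth_mktuple.
  by apply: measurableT_comp (measurable_tnth i) _; apply: measurableT_comp.
Qed.

Lemma obs_cond_prob k D : (k < n)%N -> measurable D ->
  exists phi : k.-tuple (TX * TY) -> R,
  [/\ measurable_fun setT phi, (forall v, 0 <= phi v)%R &
    forall A C, measurable A -> measurable C ->
      P (W @^-1` A `&` Zpast X Y k @^-1` C `&` X k @^-1` D) =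
      \int[P]_(w in W @^-1` A `&` Zpast X Y k @^-1` C)
        (phi (Zpast X Y k w))%:E].
Proof.
case: k => [_|j jn] mD.
  exists (fun=> fine (PX1 D)); split => // [v|A C mA _].
    by rewrite fine_ge0.
  exact: first_obs_cond_prob.
have [h mh hh] := last_estimate_factors_through (ltnW jn).
exists (fun v => fine (K j.+1 (h v) D)); split.
- exact/measurableT_comp/(measurableT_comp (measurable_kernel (K j.+1) D mD)).
- by move=> v; rewrite fine_ge0.
- move=> A C mA mC; rewrite next_obs_cond_prob//; apply: eq_integral => w _.
  by rewrite -hh fineK// prob_kernel_fin_num.
Qed.
End online_learning.

Theorem lemma6 (R : realType) (dO dX dY dYh dW : measure_display)
  (Om : measurableType dO) (TX : measurableType dX) (TY : measurableType dY)
  (TYh : measurableType dYh) (TW : measurableType dW)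
  (n : nat) (PX1 : probability TX R) (K : nat -> R.-pker (TX * TYh)%type ~> TX)
  (PY : R.-pker (TX * TW)%type ~> TY) (PW : probability TW R)
  (psi : forall k : nat, (k.-tuple (TX * TY) * k.-tuple TYh * TX)%type -> TYh)
  (psi_meas : forall k : nat, measurable_fun setT (psi k))
  (P : probability Om R) (W : Om -> TW) (X : nat -> Om -> TX)
  (Y : nat -> Om -> TY) (Yh : nat -> Om -> TYh)
  (HP : generated_by n PX1 K PY PW psi P W X Y Yh)
  (k : nat) (hk : (k < n)%N) :
  cond_indep P W (fun w => (X k w, past Yh k.+1 w)) (Zpast X Y k).
Proof.
case: HP => mW [mX [mY [hX0 [_ [hYh hK]]]]] A mA.
have mZ := measurable_Zpast mX mY (ltnW hk).
have [g [mg g01 hg]] := cond_prob_exists P mZ (measurable_preimage mW mA).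
exists g; split => // B C mB mC.
have [Gam mGam hGam] := past_estimates_factor_through psi_meas hYh hk.
pose E := [set p | C p.1 /\ B (p.2, Gam p)].
have mE : measurable E.
  apply: (measurableI (fst @^-1` C)); first exact: measurable_preimage.
  by apply: measurable_preimage => //; exact: measurable_fun_pair.
rewrite -setIA.
have -> : (fun w => (X k w, past Yh k.+1 w)) @^-1` B `&` Zpast X Y k @^-1` C =
    (fun w => (Zpast X Y k w, X k w)) @^-1` E.
  by apply/seteqP; split => w /=; rewrite hGam => -[].
have g0 v : (0 <= g v)%R by case/andP: (g01 v).
suff : cond_prob_version P (W @^-1` A) (fun w => (Zpast X Y k w, X k w))
    (g \o fst) by apply.
apply: (cond_prob_version_pair mZ (mX k hk) (measurable_preimage mW mA) mg g0
  hg) => D mD.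
have [phi [mphi phi0 hphi]] := obs_cond_prob psi_meas hYh mW hX0 hK hk mD.
exists phi; split => // C' mC'; last exact: hphi.
by have := hphi setT C' measurableT mC'; rewrite preimage_setT !setTI setIC.
Qed.
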